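(* For integers $m\ge1$, $n\ge2$, $$S(2m,n,\pi/2)=(-1)^mn+\frac{1}{(2m-1)!}\sum_{k=1}^m n^{2k}A_{2m}^{(2k)}T_{2k-1},$$ $$S(m,n,\pi/4)=(-1)^{m/2}\,n\,\mathbb{1}_{m\text{ even}}+\frac{1}{2(m-1)!}\sum_{k=1}^m(2n)^kA_m^{(k)}E_{k-1}.$$
   Context: $S(m,n,\alpha)=\sum_{k=0}^{n-1}\cot^m\frac{\alpha+k\pi}{n}$. The arctangent numbers $A_m^{(k)}$ are defined by $\frac{(\arctan z)^k}{k!}=\sum_{m\ge k}\frac{A_m^{(k)}}{m!}z^m$. The tangent numbers $T_j$ are given by $\tan z=\sum_{j\ge0}\frac{T_j}{j!}z^j$. The Euler zigzag numbers $E_j$ are given by $\tan z+\sec z=\sum_{j\ge0}\frac{E_j}{j!}z^j$. $\mathbb{1}_{m\text{ even}}$ is $1$ if $m$ is even and $0$ otherwise. *)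

From Stdlib Require Import Reals Factorial.
From Coquelicot Require Import Coquelicot.
Open Scope R_scope.

Definition cot (x : R) : R := cos x / sin x.
Definition Ssum (m n : nat) (alpha : R) : R :=
  sum_n_m (fun k => (cot ((alpha + INR k * PI) / INR n)) ^ m) 0 (n - 1).

(* Coefficients of exponential generating functions are Taylor coefficients:
   if f(z) = sum_j c_j z^j / j!  near 0, then c_j = f^{(j)}(0). *)

(* arctangent numbers: (arctan z)^k / k! = sum_{m>=k} A_m^(k) z^m / m! *)
Definition arctanA (m k : nat) : R :=
  Derive_n (fun z => (atan z) ^ k / INR (fact k)) m 0.

(* tangent numbers: tan z = sum_j T_j z^j / j! *)
Definition tangentT (j : nat) : R := Derive_n tan j 0.

(* Euler zigzag numbers: tan z + sec z = sum_j E_j z^j / j! *)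
Definition zigzagE (j : nat) : R :=
  Derive_n (fun z => tan z + / cos z) j 0.

(* With theta_k = (alpha + k pi)/n and x_k = cot theta_k, the x_k are the n distinct roots
   of sin alpha Re (y + i)^n - cos alpha Im (y + i)^n, which gives the product formula
   sin alpha * prod_k (cos psi - x_k sin psi) = sin (alpha - n psi).  Its logarithmic
   derivative, written in t = tan psi, reads
     sum_k x_k / (1 - x_k t) = n atan'(t) (cot (alpha - n atan t) - t).
   The M-th derivative at t = 0 of the left side is M! sum_k x_k^(M+1).  On the right,
   Faa di Bruno's formula for atan' * (Phi o atan) pairs the Taylor coefficients of
   Phi(psi) = cot (alpha - n psi) with the arctangent numbers A_(M+1)^(j+1), and
   t / (1 + t^2) contributes M! sin (M pi / 2).  Finally Phi(psi) = tan (n psi) for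
   alpha = pi/2 and Phi(psi) = tan (2 n psi) + sec (2 n psi) for alpha = pi/4. *)

From Stdlib Require Import Reals Factorial Lra Lia.
From Coquelicot Require Import Coquelicot.
From mathcomp Require all_boot all_algebra Rstruct.
Open Scope R_scope.

(** * Smooth functions on an open interval *)

Lemma locally_interval a b x : a < x < b -> locally x (fun y => a < y < b).
Proof. intros Hx. apply (open_and (fun y => a < y) (fun y => y < b)); auto using open_gt, open_lt. Qed.

Lemma locally_eq_on a b (f g : R -> R) x : (forall y, a < y < b -> f y = g y) -> a < x < b ->
  locally x (fun y => f y = g y).
Proof. intros E Hx. apply filter_imp with (2 := locally_interval a b x Hx). exact E. Qed.

Fixpoint derivable_n_on (a b : R) (k : nat) (f : R -> R) : Prop :=
  match k with
  | O => True
  | S k => (forall x, a < x < b -> ex_derive f x) /\ derivable_n_on a b k (Derive f)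
  end.

Definition smooth_on (a b : R) (f : R -> R) : Prop := forall k, derivable_n_on a b k f.

Section SmoothOn.
Variables a b : R.

Lemma derivable_n_on_ext k : forall f g, (forall x, a < x < b -> f x = g x) ->
  derivable_n_on a b k f -> derivable_n_on a b k g.
Proof.
  induction k as [|k IH]; [easy|]. intros f g E [Hf HDf]. split.
  - intros x Hx. apply ex_derive_ext_loc with f; [apply locally_eq_on with a b|]; auto.
  - apply IH with (Derive f); [|exact HDf]. intros x Hx.
    apply Derive_ext_loc, locally_eq_on with a b; auto.
Qed.

Lemma derivable_n_on_S k f g : (forall x, a < x < b -> is_derive f x (g x)) ->
  derivable_n_on a b k g -> derivable_n_on a b (S k) f.
Proof.
  intros Hd Hg. split.
  - intros x Hx. exists (g x). auto.
  - apply derivable_n_on_ext with g; [|exact Hg].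
    intros x Hx. symmetry. apply is_derive_unique. auto.
Qed.

Lemma derivable_n_on_pred k f : derivable_n_on a b (S k) f -> derivable_n_on a b k f.
Proof.
  revert f. induction k as [|k IH]; [easy|]. intros f [Hf HDf]. split; auto.
Qed.

Lemma is_derive_Derive_on k f x : derivable_n_on a b (S k) f -> a < x < b ->
  is_derive f x (Derive f x).
Proof. intros [Hf _] Hx. apply Derive_correct. auto. Qed.

Lemma derivable_n_on_const k c : derivable_n_on a b k (fun _ => c).
Proof.
  revert c. induction k as [|k IH]; [easy|]. intros c.
  apply derivable_n_on_S with (fun _ => 0); auto using is_derive_const.
Qed.

Lemma derivable_n_on_id k : derivable_n_on a b k (fun x => x).
Proof.
  destruct k; [easy|]. apply derivable_n_on_S with (fun _ => 1).
  - intros x _. exact (is_derive_id x).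
  - apply derivable_n_on_const.
Qed.

Lemma derivable_n_on_plus k : forall f g, derivable_n_on a b k f -> derivable_n_on a b k g ->
  derivable_n_on a b k (fun x => f x + g x).
Proof.
  induction k as [|k IH]; [easy|]. intros f g Hf Hg.
  apply derivable_n_on_S with (fun x => Derive f x + Derive g x).
  - intros x Hx. apply (is_derive_plus f g); eapply is_derive_Derive_on; eauto.
  - apply IH; [apply Hf | apply Hg].
Qed.

Lemma derivable_n_on_opp k : forall f, derivable_n_on a b k f ->
  derivable_n_on a b k (fun x => - f x).
Proof.
  induction k as [|k IH]; [easy|]. intros f Hf.
  apply derivable_n_on_S with (fun x => - Derive f x).
  - intros x Hx. apply (is_derive_opp f); eapply is_derive_Derive_on; eauto.
  - apply IH, Hf.
Qed.

Lemma derivable_n_on_mult k : forall f g, derivable_n_on a b k f -> derivable_n_on a b k g ->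
  derivable_n_on a b k (fun x => f x * g x).
Proof.
  induction k as [|k IH]; [easy|]. intros f g Hf Hg.
  apply derivable_n_on_S with (fun x => Derive f x * g x + f x * Derive g x).
  - intros x Hx. apply (is_derive_mult f g); try (eapply is_derive_Derive_on; eauto).
    intros; apply Rmult_comm.
  - apply derivable_n_on_plus; apply IH;
      auto using derivable_n_on_pred; [apply Hf | apply Hg].
Qed.

Lemma derivable_n_on_inv k : forall f, derivable_n_on a b k f ->
  (forall x, a < x < b -> f x <> 0) -> derivable_n_on a b k (fun x => / f x).
Proof.
  induction k as [|k IH]; [easy|]. intros f Hf Hnz.
  apply derivable_n_on_S with (fun x => - (Derive f x * (/ f x * / f x))).
  - intros x Hx.
    replace (- (Derive f x * (/ f x * / f x))) with (- Derive f x / f x ^ 2)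
      by (field; auto).
    apply (is_derive_inv f); [eapply is_derive_Derive_on; eauto | auto].
  - apply derivable_n_on_opp, derivable_n_on_mult; [apply Hf|].
    apply derivable_n_on_mult; apply IH; auto using derivable_n_on_pred.
Qed.

Lemma smooth_on_Derive f : smooth_on a b f -> smooth_on a b (Derive f).
Proof. intros Hf k. exact (proj2 (Hf (S k))). Qed.

Lemma smooth_on_Derive_n f j : smooth_on a b f -> smooth_on a b (Derive_n f j).
Proof.
  intros Hf. induction j as [|j IH]; [exact Hf|]. apply smooth_on_Derive, IH.
Qed.

Lemma smooth_on_is_derive f x : smooth_on a b f -> a < x < b -> is_derive f x (Derive f x).
Proof. intros Hf. apply is_derive_Derive_on with 0%nat, Hf. Qed.

Lemma smooth_on_ex_derive_n f x k : smooth_on a b f -> a < x < b -> ex_derive_n f k x.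
Proof.
  intros Hf Hx. destruct k as [|k]; [easy|].
  exists (Derive (Derive_n f k) x). apply smooth_on_is_derive; auto.
  apply smooth_on_Derive_n, Hf.
Qed.

Lemma smooth_on_locally f x n : smooth_on a b f -> a < x < b ->
  locally x (fun y => forall k, (k <= n)%nat -> ex_derive_n f k y).
Proof.
  intros Hf Hx. apply filter_imp with (2 := locally_interval a b x Hx).
  intros y Hy k _. apply smooth_on_ex_derive_n; auto.
Qed.

Lemma smooth_on_const c : smooth_on a b (fun _ => c).
Proof. intros k. apply derivable_n_on_const. Qed.

Lemma smooth_on_id : smooth_on a b (fun x => x).
Proof. intros k. apply derivable_n_on_id. Qed.

Lemma smooth_on_plus f g : smooth_on a b f -> smooth_on a b g ->
  smooth_on a b (fun x => f x + g x).
Proof. intros Hf Hg k. apply derivable_n_on_plus; auto. Qed.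

Lemma smooth_on_minus f g : smooth_on a b f -> smooth_on a b g ->
  smooth_on a b (fun x => f x - g x).
Proof. intros Hf Hg k. apply derivable_n_on_plus, derivable_n_on_opp; auto. Qed.

Lemma smooth_on_mult f g : smooth_on a b f -> smooth_on a b g ->
  smooth_on a b (fun x => f x * g x).
Proof. intros Hf Hg k. apply derivable_n_on_mult; auto. Qed.

Lemma smooth_on_scal c f : smooth_on a b f -> smooth_on a b (fun x => c * f x).
Proof. intros Hf. apply smooth_on_mult; auto using smooth_on_const. Qed.

Lemma smooth_on_pow f i : smooth_on a b f -> smooth_on a b (fun x => f x ^ i).
Proof.
  intros Hf. induction i as [|i IH]; simpl; auto using smooth_on_const, smooth_on_mult.
Qed.

Lemma smooth_on_inv f : smooth_on a b f -> (forall x, a < x < b -> f x <> 0) ->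
  smooth_on a b (fun x => / f x).
Proof. intros Hf Hnz k. apply derivable_n_on_inv; auto. Qed.

Lemma smooth_on_div f g : smooth_on a b f -> smooth_on a b g ->
  (forall x, a < x < b -> g x <> 0) -> smooth_on a b (fun x => f x / g x).
Proof. intros Hf Hg Hnz. apply smooth_on_mult; auto using smooth_on_inv. Qed.

End SmoothOn.

Lemma derivable_n_on_comp a b c d k : forall g f, derivable_n_on c d k g ->
  derivable_n_on a b k f -> (forall x, a < x < b -> c < f x < d) ->
  derivable_n_on a b k (fun x => g (f x)).
Proof.
  induction k as [|k IH]; [easy|]. intros g f Hg Hf Hfx.
  apply derivable_n_on_S with (fun x => Derive f x * Derive g (f x)).
  - intros x Hx. apply (is_derive_comp g f); eapply is_derive_Derive_on; eauto.
  - apply derivable_n_on_mult; [apply Hf|]. apply IH; auto using derivable_n_on_pred. apply Hg.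
Qed.

Lemma smooth_on_comp a b c d g f : smooth_on c d g -> smooth_on a b f ->
  (forall x, a < x < b -> c < f x < d) -> smooth_on a b (fun x => g (f x)).
Proof. intros Hg Hf Hfx k. apply derivable_n_on_comp with c d; auto. Qed.

Lemma smooth_on_sin_cos a b : smooth_on a b sin /\ smooth_on a b cos.
Proof.
  enough (H : forall k, derivable_n_on a b k sin /\ derivable_n_on a b k cos)
    by (split; intros k; apply H).
  induction k as [|k [Hs Hc]]; [easy|]. split.
  - apply derivable_n_on_S with cos; [intros x _; apply is_derive_sin | exact Hc].
  - apply derivable_n_on_S with (fun x => - sin x);
      [intros x _; apply is_derive_cos | apply derivable_n_on_opp, Hs].
Qed.

Lemma smooth_on_sin a b : smooth_on a b sin.
Proof. apply smooth_on_sin_cos. Qed.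

Lemma smooth_on_cos a b : smooth_on a b cos.
Proof. apply smooth_on_sin_cos. Qed.

Lemma smooth_on_atan a b : smooth_on a b atan.
Proof.
  intros [|k]; [easy|]. apply derivable_n_on_S with (fun x => / (1 + x²)).
  - intros x _. apply is_derive_atan.
  - apply smooth_on_inv; unfold Rsqr.
    + apply smooth_on_plus; auto using smooth_on_const, smooth_on_mult, smooth_on_id.
    + intros x _. pose proof (Rle_0_sqr x). unfold Rsqr in *. lra.
Qed.

Lemma cos_neq_0_half_pi x : - (PI / 2) < x < PI / 2 -> cos x <> 0.
Proof. intros Hx. apply Rgt_not_eq, cos_gt_0; lra. Qed.

Lemma smooth_on_tan : smooth_on (- (PI / 2)) (PI / 2) tan.
Proof.
  apply smooth_on_div; auto using smooth_on_sin, smooth_on_cos, cos_neq_0_half_pi.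
Qed.

Lemma smooth_on_sec : smooth_on (- (PI / 2)) (PI / 2) (fun x => / cos x).
Proof. apply smooth_on_inv; auto using smooth_on_cos, cos_neq_0_half_pi. Qed.

(** * Faa di Bruno's formula *)

Lemma is_derive_sum_f_R0 (F : nat -> R -> R) (d : nat -> R) K x :
  (forall k, (k <= K)%nat -> is_derive (F k) x (d k)) ->
  is_derive (fun y => sum_f_R0 (fun k => F k y) K) x (sum_f_R0 d K).
Proof.
  induction K as [|K IH]; intros Hd; simpl; [auto|].
  apply (is_derive_plus (fun y => sum_f_R0 (fun k => F k y) K)); auto.
Qed.

(* [bell f M j] is the partial Bell polynomial B_{M,j}(f', f'', ...), by the recursion
   that makes D^M (g o f) = sum_j (g^(j) o f) * bell f M j. *)
Fixpoint bell (f : R -> R) (M j : nat) {struct M} : R -> R :=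
  match M, j with
  | O, O => fun _ => 1
  | S M', S j' => fun t => Derive (bell f M' (S j')) t + Derive f t * bell f M' j' t
  | _, _ => fun _ => 0
  end.

Lemma bell_above f M : forall j t, (M < j)%nat -> bell f M j t = 0.
Proof.
  induction M as [|M IH]; intros [|j] t Hj; simpl; try lia; auto.
  rewrite (IH j t) by lia.
  rewrite (Derive_ext _ (fun _ => 0)) by (intros s; apply IH; lia).
  rewrite Derive_const. ring.
Qed.

Lemma sum_f_R0_shift_split (u v : nat -> R) M : u (S M) = 0 -> v O = 0 ->
  sum_f_R0 (fun j => u j + v j) (S M) = sum_f_R0 (fun j => u j + v (S j)) M.
Proof.
  intros Hu Hv. rewrite !plus_sum, (decomp_sum v) by lia. simpl. rewrite Hu, Hv. ring.
Qed.

Section FaaDiBruno.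
Variables (a b c d : R) (f Phi : R -> R).
Hypothesis f_smooth : smooth_on a b f.
Hypothesis Phi_smooth : smooth_on c d Phi.
Hypothesis f_maps : forall x, a < x < b -> c < f x < d.

Lemma smooth_on_bell M : forall j, smooth_on a b (bell f M j).
Proof.
  induction M as [|M IH]; intros [|j]; simpl; auto using smooth_on_const.
  apply smooth_on_plus; auto using smooth_on_Derive, smooth_on_mult.
Qed.

Lemma is_derive_Derive_n_comp_mult j g t : smooth_on a b g -> a < t < b ->
  is_derive (fun s => Derive_n Phi j (f s) * g s) t
    (Derive f t * Derive_n Phi (S j) (f t) * g t + Derive_n Phi j (f t) * Derive g t).
Proof.
  intros Hg Ht. apply (is_derive_mult (fun s => Derive_n Phi j (f s)) g);
    [| apply smooth_on_is_derive with a b; auto | intros; apply Rmult_comm].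
  apply (is_derive_comp (Derive_n Phi j) f).
  - apply smooth_on_is_derive with c d; auto using smooth_on_Derive_n.
  - apply smooth_on_is_derive with a b; auto.
Qed.

Lemma Derive_n_Derive_mult_comp M : forall t, a < t < b ->
  Derive_n (fun s => Derive f s * Phi (f s)) M t =
    sum_f_R0 (fun j => Derive_n Phi j (f t) * bell f (S M) (S j) t) M.
Proof.
  induction M as [|M IH]; intros t Ht.
  - simpl. rewrite Derive_const. ring.
  - set (B := bell f (S M)).
    cbn [Derive_n].
    rewrite (Derive_ext_loc _ (fun s => sum_f_R0 (fun j => Derive_n Phi j (f s) * B (S j) s) M)).
    2: { apply locally_eq_on with a b; [exact IH | exact Ht]. }
    rewrite (is_derive_unique _ _ (sum_f_R0 (fun j => Derive f t * Derive_n Phi (S j) (f t) * B (S j) t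
                                            + Derive_n Phi j (f t) * Derive (B (S j)) t) M)).
    2: { apply is_derive_sum_f_R0. intros j _.
         apply is_derive_Derive_n_comp_mult; [apply smooth_on_bell | exact Ht]. }
    rewrite (sum_eq _ (fun j => Derive_n Phi j (f t) * Derive (B (S j)) t
                              + Derive_n Phi j (f t) * (Derive f t * B j t)) (S M))
      by (intros j _; unfold B; cbn [bell]; ring).
    rewrite sum_f_R0_shift_split.
    + apply sum_eq. intros j _. ring.
    + rewrite (Derive_ext _ (fun _ => 0)) by (intros s; apply bell_above; lia).
      rewrite Derive_const. ring.
    + unfold B. cbn [bell]. ring.
Qed.

End FaaDiBruno.

Lemma Derive_n_monomial_at0 i j :
  Derive_n (fun u => u ^ i / INR (fact i)) j 0 = if Nat.eqb j i then 1 else 0.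
Proof.
  rewrite (Derive_n_ext _ (fun u => / INR (fact i) * u ^ i)) by (intros u; unfold Rdiv; ring).
  rewrite Derive_n_scal_l, Derive_n_pow.
  destruct (Compare_dec.le_dec j i), (Nat.eqb_spec j i) as [->|Hne]; try lia.
  - rewrite Nat.sub_diag. simpl. field. apply INR_fact_neq_0.
  - rewrite pow_i by lia. ring.
  - ring.
Qed.

Lemma sum_f_R0_single (F : nat -> R) i M : (i <= M)%nat ->
  (forall j, j <> i -> F j = 0) -> sum_f_R0 F M = F i.
Proof.
  intros Hi HF. induction M as [|M IH].
  - replace i with O by lia. reflexivity.
  - simpl. destruct (Nat.eq_dec i (S M)) as [->|Hne].
    + rewrite sum_eq_R0; [ring|]. intros j Hj. apply HF. lia.
    + rewrite IH, (HF (S M)) by lia. ring.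
Qed.

Lemma Derive_atan_pow_fact i z :
  Derive (fun u => atan u ^ S i / INR (fact (S i))) z = Derive atan z * (atan z ^ i / INR (fact i)).
Proof.
  rewrite (Derive_ext _ (fun u => / INR (fact (S i)) * atan u ^ S i)) by (intros u; unfold Rdiv; ring).
  rewrite Derive_scal, Derive_pow by (eexists; apply is_derive_atan).
  rewrite fact_simpl, mult_INR. simpl pred. field.
  split; [apply INR_fact_neq_0 | apply not_0_INR; lia].
Qed.

Lemma arctanA_bell M i : (i <= M)%nat -> arctanA (S M) (S i) = bell atan (S M) (S i) 0.
Proof.
  intros Hi. unfold arctanA.
  set (F := fun u => atan u ^ S i / INR (fact (S i))).
  transitivity (Derive_n (Derive_n F 1) M 0); [now rewrite Derive_n_comp, Nat.add_1_r|].
  rewrite (Derive_n_ext (Derive_n F 1) (fun z => Derive atan z * (atan z ^ i / INR (fact i))))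
    by apply Derive_atan_pow_fact.
  rewrite (Derive_n_Derive_mult_comp (-1) 1 (- (PI / 2)) (PI / 2) atan (fun u => u ^ i / INR (fact i)));
    auto using smooth_on_atan, smooth_on_div, smooth_on_pow, smooth_on_id, smooth_on_const,
      INR_fact_neq_0; try lra.
  - rewrite (sum_f_R0_single _ i) by (auto; intros j Hj; rewrite atan_0, Derive_n_monomial_at0;
      apply Nat.eqb_neq in Hj; rewrite Hj; ring).
    rewrite atan_0, Derive_n_monomial_at0, Nat.eqb_refl. ring.
  - intros x _. pose proof (atan_bound x). lra.
Qed.

(** * The cotangents of the angles (alpha + k pi) / n *)

(* [yi_pow j y] is the pair (Re, Im) of (y + i)^j. *)
Fixpoint yi_pow (j : nat) (y : R) : R * R :=
  match j with
  | O => (1, 0)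
  | S j => let p := yi_pow j y in (y * fst p - snd p, fst p + y * snd p)
  end.

Lemma yi_pow_cot j phi : sin phi <> 0 ->
  fst (yi_pow j (cot phi)) * sin phi ^ j = cos (INR j * phi) /\
  snd (yi_pow j (cot phi)) * sin phi ^ j = sin (INR j * phi).
Proof.
  intros Hs. induction j as [|j [IHc IHs]].
  - simpl. rewrite Rmult_0_l, cos_0, sin_0. split; ring.
  - rewrite S_INR, Rmult_plus_distr_r, Rmult_1_l, cos_plus, sin_plus, <- IHc, <- IHs.
    unfold cot. simpl. split; field; exact Hs.
Qed.

Module YiPowPoly.
Import all_boot all_algebra Rstruct.
Import GRing.Theory.
Local Open Scope ring_scope.

Fixpoint yi_pow_poly (j : nat) : {poly R} * {poly R} :=
  match j with
  | O => (1, 0)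
  | S j => let p := yi_pow_poly j in ('X * p.1 - p.2, p.1 + 'X * p.2)
  end.

Lemma horner_yi_pow_poly j y : ((yi_pow_poly j).1.[y], (yi_pow_poly j).2.[y]) = yi_pow j y.
Proof.
elim: j => [|j IH] /=; first by rewrite !hornerE.
by case: (yi_pow j y) IH => a b [<- <-] /=; rewrite !hornerE.
Qed.

Lemma size_yi_pow_poly j : (yi_pow_poly j).1 \is monic /\
  size (yi_pow_poly j).1 = j.+1 /\ (size (yi_pow_poly j).2 <= j)%N.
Proof.
elim: j => [|j [mon1 [size1 size2]]] /=.
  by rewrite monic1 size_poly1 size_poly0.
have sizeX1 : size ('X * (yi_pow_poly j).1) = j.+2.
  by rewrite mulrC size_mulX ?size1 // -size_poly_eq0 size1.
have lt2 : (size (- (yi_pow_poly j).2)%R < size ('X * (yi_pow_poly j).1)%R)%N.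
  by rewrite size_polyN sizeX1 ltnS (leq_trans size2).
have monX1 : 'X * (yi_pow_poly j).1 \is monic by rewrite monicMl ?monicX.
split; first by rewrite monicE lead_coefDl // (eqP monX1).
split; first by rewrite size_polyDl.
apply: leq_trans (size_polyD _ _) _; rewrite geq_max size1 leqnn /=.
have [->|nz2] := eqVneq (yi_pow_poly j).2 0; first by rewrite mulr0 size_poly0.
by rewrite mulrC size_mulX.
Qed.

Lemma prod_f_R0_big (F : nat -> R) N : \prod_(0 <= k < N.+1) F k = prod_f_R0 F N.
Proof. by elim: N => [|N IH]; rewrite ?big_nat1 // big_nat_recr //= IH. Qed.

Lemma yi_pow_combination_factor N (sa ca : R) (x : nat -> R) : sa <> 0 ->
  (forall k l, (k <= N)%coq_nat -> (l <= N)%coq_nat -> x k = x l -> k = l) ->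
  (forall k, (k <= N)%coq_nat ->
     sa * (yi_pow N.+1 (x k)).1 - ca * (yi_pow N.+1 (x k)).2 = 0) ->
  forall y, sa * (yi_pow N.+1 y).1 - ca * (yi_pow N.+1 y).2 = sa * prod_f_R0 (fun k => y - x k) N.
Proof.
move=> /eqP sa0 x_inj roots y.
have [mon1 [size1 size2]] := size_yi_pow_poly N.+1.
set q := sa *: (yi_pow_poly N.+1).1 - ca *: (yi_pow_poly N.+1).2.
have qE z : q.[z] = sa * (yi_pow N.+1 z).1 - ca * (yi_pow N.+1 z).2.
  by rewrite -horner_yi_pow_poly !hornerE.
have sizeZ1 : size (sa *: (yi_pow_poly N.+1).1) = N.+2 by rewrite size_scale ?size1.
have lt2 : (size (- (ca *: (yi_pow_poly N.+1).2))%R < size (sa *: (yi_pow_poly N.+1).1)%R)%N.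
  by rewrite size_polyN sizeZ1 ltnS (leq_trans (size_scale_leq _ _)).
set rs := [seq x k | k <- iota 0 N.+1].
have size_q : size q = (size rs).+1 by rewrite size_map size_iota size_polyDl.
have lead_q : lead_coef q = sa by rewrite lead_coefDl // lead_coefZ (eqP mon1) mulr1.
have roots_q : all (root q) rs.
  apply/allP => z /mapP[k]; rewrite mem_iota => /andP[_ lek] ->.
  by rewrite /root qE roots //; apply/leP; rewrite -ltnS.
have uniq_rs : uniq_roots rs.
  rewrite uniq_rootsE map_inj_in_uniq ?iota_uniq // => k l.
  by rewrite !mem_iota /= !add0n !ltnS => /leP lek /leP lel; apply: x_inj.
rewrite -qE (all_roots_prod_XsubC size_q roots_q uniq_rs) lead_q hornerZ horner_prod.
by rewrite big_map -prod_f_R0_big /index_iota subn0; congr (_ * _); apply: eq_bigr => k _; rewrite hornerXsubC.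
Qed.

End YiPowPoly.

Lemma yi_pow_combination_factor N (sa ca : R) (x : nat -> R) : sa <> 0 ->
  (forall k l, (k <= N)%nat -> (l <= N)%nat -> x k = x l -> k = l) ->
  (forall k, (k <= N)%nat -> sa * fst (yi_pow (S N) (x k)) - ca * snd (yi_pow (S N) (x k)) = 0) ->
  forall y, sa * fst (yi_pow (S N) y) - ca * snd (yi_pow (S N) y) = sa * prod_f_R0 (fun k => y - x k) N.
Proof. exact (YiPowPoly.yi_pow_combination_factor N sa ca x). Qed.

Lemma prod_f_R0_ext (F G : nat -> R) N : (forall k, (k <= N)%nat -> F k = G k) ->
  prod_f_R0 F N = prod_f_R0 G N.
Proof.
  induction N as [|N IH]; intros E; simpl; rewrite ?IH, ?E; auto.
Qed.

Lemma prod_f_R0_scal c (F : nat -> R) N :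
  prod_f_R0 (fun k => c * F k) N = c ^ S N * prod_f_R0 F N.
Proof. induction N as [|N IH]; simpl in *; [|rewrite IH]; ring. Qed.

Lemma prod_f_R0_const_1 N : prod_f_R0 (fun _ => 1) N = 1.
Proof. induction N as [|N IH]; simpl; [|rewrite IH]; ring. Qed.

Lemma is_derive_prod_f_R0 (F : nat -> R -> R) (d : nat -> R) K x :
  (forall k, (k <= K)%nat -> is_derive (F k) x (d k)) ->
  (forall k, (k <= K)%nat -> F k x <> 0) ->
  is_derive (fun y => prod_f_R0 (fun k => F k y) K) x
    (prod_f_R0 (fun k => F k x) K * sum_f_R0 (fun k => d k / F k x) K).
Proof.
  induction K as [|K IH]; intros Hd Hnz; simpl.
  - replace (F 0%nat x * (d 0%nat / F 0%nat x)) with (d 0%nat) by (field; auto). auto.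
  - replace (prod_f_R0 (fun k => F k x) K * F (S K) x *
             (sum_f_R0 (fun k => d k / F k x) K + d (S K) / F (S K) x))
      with (prod_f_R0 (fun k => F k x) K * sum_f_R0 (fun k => d k / F k x) K * F (S K) x
            + prod_f_R0 (fun k => F k x) K * d (S K)) by (field; auto).
    apply (is_derive_mult (fun y => prod_f_R0 (fun k => F k y) K) (F (S K)));
      auto using Rmult_comm.
Qed.

Lemma cot_sub p q : sin p <> 0 -> sin q <> 0 -> cot p - cot q = sin (q - p) / (sin p * sin q).
Proof. intros Hp Hq. unfold cot. rewrite sin_minus. field. auto. Qed.

Lemma cot_decreasing p q : 0 < p -> p < q -> q < PI -> cot q < cot p.
Proof.
  intros Hp Hpq Hq.
  assert (0 < sin p) by (apply sin_gt_0; lra). assert (0 < sin q) by (apply sin_gt_0; lra).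
  assert (0 < sin (q - p)) by (apply sin_gt_0; lra).
  assert (0 < cot p - cot q); [|lra].
  rewrite cot_sub by lra. apply Rdiv_lt_0_compat; nra.
Qed.

Definition cot_angle (alpha : R) (n k : nat) : R := cot ((alpha + INR k * PI) / INR n).

Section CotAngles.
Variables (n : nat) (alpha : R).
Hypothesis n_pos : (1 <= n)%nat.
Hypothesis alpha_range : 0 < alpha < PI.

Let x := cot_angle alpha n.

Lemma INR_n_ge_1 : 1 <= INR n.
Proof. apply (le_INR 1), n_pos. Qed.

Lemma angle_range beta k : 0 < beta < PI -> (k <= n - 1)%nat ->
  0 < (beta + INR k * PI) / INR n < PI.
Proof.
  intros Hb Hk. pose proof INR_n_ge_1. pose proof (pos_INR k).
  assert (INR k + 1 <= INR n) by (rewrite <- S_INR; apply le_INR; lia).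
  split.
  - apply Rdiv_lt_0_compat; nra.
  - apply Rmult_lt_reg_r with (INR n); [lra|].
    unfold Rdiv. rewrite Rmult_assoc, Rinv_l, Rmult_1_r by lra. nra.
Qed.

Lemma sin_angle_pos k : (k <= n - 1)%nat -> 0 < sin ((alpha + INR k * PI) / INR n).
Proof. intros Hk. apply sin_gt_0; apply angle_range; auto. Qed.

Lemma cot_angle_inj k l : (k <= n - 1)%nat -> (l <= n - 1)%nat -> x k = x l -> k = l.
Proof.
  assert (Hlt : forall i j, (i <= n - 1)%nat -> (j <= n - 1)%nat -> (i < j)%nat -> x j < x i).
  { intros i j Hi Hj Hij. pose proof INR_n_ge_1. apply lt_INR in Hij.
    pose proof (angle_range alpha i alpha_range Hi). pose proof (angle_range alpha j alpha_range Hj).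
    apply cot_decreasing; try lra.
    apply Rmult_lt_compat_r; [apply Rinv_0_lt_compat; lra|].
    pose proof PI_RGT_0. nra. }
  intros Hk Hl Heq. destruct (Nat.lt_trichotomy k l) as [H|[H|H]]; auto.
  - specialize (Hlt k l Hk Hl H). lra.
  - specialize (Hlt l k Hl Hk H). lra.
Qed.

Lemma yi_pow_combination_cot phi : sin phi <> 0 ->
  (sin alpha * fst (yi_pow n (cot phi)) - cos alpha * snd (yi_pow n (cot phi))) * sin phi ^ n
  = sin (alpha - INR n * phi).
Proof.
  intros Hs. destruct (yi_pow_cot n phi Hs) as [Ec Es].
  rewrite sin_minus, <- Ec, <- Es. ring.
Qed.

Lemma cot_angle_root k : (k <= n - 1)%nat ->
  sin alpha * fst (yi_pow n (x k)) - cos alpha * snd (yi_pow n (x k)) = 0.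
Proof.
  intros Hk. pose proof (sin_angle_pos k Hk) as Hs. pose proof INR_n_ge_1.
  pose proof (yi_pow_combination_cot _ (Rgt_not_eq _ _ Hs)) as E.
  replace (alpha - INR n * ((alpha + INR k * PI) / INR n)) with (- (INR k * PI)) in E
    by (field; lra).
  rewrite sin_neg, (sin_eq_0_1 (INR k * PI)), Ropp_0 in E by (exists (Z.of_nat k); rewrite <- INR_IZR_INZ; ring).
  apply Rmult_integral in E as [E|E]; [exact E|].
  exfalso. revert E. apply pow_nonzero. lra.
Qed.

Lemma sin_prod_cot_angle psi : - PI < psi < PI ->
  sin alpha * prod_f_R0 (fun k => cos psi - x k * sin psi) (n - 1) = sin (alpha - INR n * psi).
Proof.
  intros Hpsi. destruct (Req_dec psi 0) as [->|Hpsi0].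
  - rewrite (prod_f_R0_ext _ (fun _ => 1)) by (intros; rewrite cos_0, sin_0; ring).
    rewrite prod_f_R0_const_1, Rmult_0_r, Rminus_0_r. ring.
  - assert (Hs : sin psi <> 0).
    { destruct (Rlt_dec 0 psi).
      - apply Rgt_not_eq, sin_gt_0; lra.
      - apply Rlt_not_eq, sin_lt_0_var; lra. }
    assert (Hfac := yi_pow_combination_factor (n - 1) (sin alpha) (cos alpha) x).
    replace (S (n - 1)) with n in Hfac by lia.
    rewrite <- (yi_pow_combination_cot psi Hs), Hfac; auto using cot_angle_inj, cot_angle_root.
    2: apply Rgt_not_eq, sin_gt_0; lra.
    rewrite (prod_f_R0_ext _ (fun k => sin psi * (cot psi - x k)))
      by (intros; unfold cot; field; exact Hs).
    rewrite prod_f_R0_scal. replace (S (n - 1)) with n by lia. ring.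
Qed.

Lemma cos_sub_cot_angle_pos psi k : 0 < alpha - INR n * psi < PI -> (k <= n - 1)%nat ->
  0 < cos psi - x k * sin psi.
Proof.
  intros Hpsi Hk. pose proof INR_n_ge_1.
  set (th := (alpha + INR k * PI) / INR n).
  assert (Hth : 0 < sin th) by apply (sin_angle_pos k Hk).
  assert (Hsub : 0 < sin (th - psi)).
  { apply sin_gt_0; replace (th - psi) with ((alpha - INR n * psi + INR k * PI) / INR n)
      by (unfold th; field; lra); apply angle_range; auto. }
  replace (cos psi - x k * sin psi) with (sin (th - psi) / sin th)
    by (unfold x, cot_angle, cot; fold th; rewrite sin_minus; field; lra).
  apply Rdiv_lt_0_compat; auto.
Qed.

Lemma shifted_angle_bound psi : 0 < alpha - INR n * psi < PI -> - PI < psi < PI.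
Proof. intros Hpsi. pose proof INR_n_ge_1. split; nra. Qed.

Lemma sum_cot_angle_log_derivative psi : 0 < alpha - INR n * psi < PI ->
  sum_f_R0 (fun k => (sin psi + x k * cos psi) / (cos psi - x k * sin psi)) (n - 1)
  = INR n * cot (alpha - INR n * psi).
Proof.
  intros Hpsi. pose proof (shifted_angle_bound psi Hpsi) as Hpsi'.
  set (G := fun y => prod_f_R0 (fun k => cos y - x k * sin y) (n - 1)).
  set (L := sum_f_R0 (fun k => - (sin psi + x k * cos psi) / (cos psi - x k * sin psi)) (n - 1)).
  assert (Hsa : 0 < sin alpha) by (apply sin_gt_0; lra).
  assert (Hsn : 0 < sin (alpha - INR n * psi)) by (apply sin_gt_0; lra).
  assert (D1 : is_derive G psi (G psi * L)).
  { apply is_derive_prod_f_R0; intros k Hk.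
    - auto_derive; [easy | ring].
    - apply Rgt_not_eq, cos_sub_cot_angle_pos; auto. }
  assert (D2 : is_derive G psi (- INR n * cos (alpha - INR n * psi) / sin alpha)).
  { apply is_derive_ext_loc with (fun y => sin (alpha - INR n * y) / sin alpha).
    - apply locally_eq_on with (- PI) PI; [|exact Hpsi'].
      intros y Hy. unfold G. rewrite <- sin_prod_cot_angle by exact Hy. field. lra.
    - auto_derive; [easy | unfold Rminus; field; lra]. }
  assert (HG : G psi = sin (alpha - INR n * psi) / sin alpha)
    by (unfold G; rewrite <- sin_prod_cot_angle by exact Hpsi'; field; lra).
  pose proof (is_derive_unique _ _ _ D1) as E. rewrite (is_derive_unique _ _ _ D2), HG in E.
  rewrite (sum_eq _ (fun k => - (sin psi + x k * cos psi) / (cos psi - x k * sin psi) * -1))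
    by (intros; field; apply Rgt_not_eq, cos_sub_cot_angle_pos; auto).
  assert (HL : L = - INR n * cos (alpha - INR n * psi) / sin (alpha - INR n * psi)).
  { apply Rmult_eq_reg_l with (sin (alpha - INR n * psi) / sin alpha).
    - rewrite <- E. field. lra.
    - apply Rgt_not_eq, Rdiv_lt_0_compat; auto. }
  rewrite <- scal_sum. fold L. rewrite HL. unfold cot. field. lra.
Qed.

Lemma one_sub_cot_angle_mul_pos t k : 0 < alpha - INR n * atan t < PI -> (k <= n - 1)%nat ->
  0 < 1 - x k * t.
Proof.
  intros Ht Hk. pose proof (atan_bound t). pose proof (tan_atan t) as Et. unfold tan in Et.
  set (psi := atan t) in *. rewrite <- Et.
  assert (Hc : 0 < cos psi) by (apply cos_gt_0; lra).
  replace (1 - x k * (sin psi / cos psi)) with ((cos psi - x k * sin psi) / cos psi)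
    by (field; lra).
  apply Rdiv_lt_0_compat; auto using cos_sub_cot_angle_pos.
Qed.

Lemma sum_cot_angle_geometric t : 0 < alpha - INR n * atan t < PI ->
  sum_f_R0 (fun k => x k / (1 - x k * t)) (n - 1)
  = INR n * (cot (alpha - INR n * atan t) - t) / (1 + t ^ 2).
Proof.
  intros Ht. pose proof (atan_bound t). pose proof (tan_atan t) as Et. unfold tan in Et.
  set (psi := atan t) in *. rewrite <- Et.
  assert (Hc : 0 < cos psi) by (apply cos_gt_0; lra).
  assert (E : sin psi ^ 2 + cos psi ^ 2 = 1) by (rewrite <- (sin2_cos2 psi); unfold Rsqr; ring).
  rewrite (sum_eq _ (fun k => (sin psi + x k * cos psi) / (cos psi - x k * sin psi) * cos psi ^ 2
                              - sin psi * cos psi)).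
  2: { intros k Hk. pose proof (cos_sub_cot_angle_pos psi k Ht Hk).
       transitivity (x k * cos psi * (sin psi ^ 2 + cos psi ^ 2) / (cos psi - x k * sin psi)).
       - rewrite E. field. split; lra.
       - field. lra. }
  rewrite minus_sum, <- scal_sum, sum_cot_angle_log_derivative, sum_cte by exact Ht.
  replace (S (n - 1)) with n by lia.
  replace (1 + (sin psi / cos psi) ^ 2) with (/ cos psi ^ 2).
  - field. lra.
  - transitivity ((sin psi ^ 2 + cos psi ^ 2) / cos psi ^ 2).
    + rewrite E. field. lra.
    + field. lra.
Qed.

End CotAngles.

(** * Taylor coefficients at 0 *)

Lemma Derive_n_sum_f_R0 (F : nat -> R -> R) K M x :
  locally x (fun y => forall k j, (k <= K)%nat -> (j <= M)%nat -> ex_derive_n (F k) j y) ->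
  Derive_n (fun y => sum_f_R0 (fun k => F k y) K) M x = sum_f_R0 (fun k => Derive_n (F k) M x) K.
Proof.
  intros H. rewrite <- sum_n_Reals.
  rewrite (Derive_n_ext _ (fun y => sum_n (fun k => F k y) K))
    by (intros y; symmetry; apply sum_n_Reals).
  apply is_derive_n_unique, is_derive_n_sum_n.
  apply filter_imp with (2 := H); auto.
Qed.

Lemma Derive_n_geometric a b x j t : (forall s, a < s < b -> 1 - x * s <> 0) -> a < t < b ->
  Derive_n (fun s => x / (1 - x * s)) j t = INR (fact j) * x ^ S j / (1 - x * t) ^ S j.
Proof.
  intros Hnz. revert t. induction j as [|j IH]; intros t Ht.
  - simpl. field. auto.
  - cbn [Derive_n].
    rewrite (Derive_ext_loc _ (fun s => INR (fact j) * x ^ S j / (1 - x * s) ^ S j))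
      by (apply locally_eq_on with a b; auto).
    apply is_derive_unique. pose proof (Hnz t Ht).
    set (c := INR (fact j) * x ^ S j). remember (S j) as m eqn:Hm.
    auto_derive; [apply pow_nonzero; unfold Rminus in *; auto|].
    unfold c. subst m. rewrite fact_simpl, mult_INR. simpl pred. simpl pow. unfold Rminus in *.
    field. split; [apply pow_nonzero|]; auto.
Qed.

(* [atan_wave k s t] is cos^k psi * sin (k psi + s) for psi = atan t; [t / (1 + t^2)] is
   [atan_wave 1 0], and each differentiation raises [k] by one and shifts [s] by pi/2. *)
Definition atan_wave (k : nat) (s t : R) : R := cos (atan t) ^ k * sin (INR k * atan t + s).

Lemma cos_atan_sqr t : cos (atan t) ^ 2 = / (1 + t ^ 2).
Proof.
  assert (H : 0 < 1 + t²) by (pose proof (Rle_0_sqr t); lra).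
  pose proof (sqrt_lt_R0 _ H).
  rewrite cos_atan.
  replace ((1 / sqrt (1 + t²)) ^ 2) with (/ (sqrt (1 + t²) * sqrt (1 + t²))) by (field; lra).
  rewrite sqrt_sqrt by lra. unfold Rsqr. field. unfold Rsqr in H. lra.
Qed.

Lemma is_derive_atan_wave k s t :
  is_derive (atan_wave (S k) s) t (INR (S k) * atan_wave (S (S k)) (s + PI / 2) t).
Proof.
  unfold atan_wave. remember (S k) as m eqn:Hm.
  replace (INR (S m) * atan t + (s + PI / 2)) with (INR m * atan t + s + atan t + PI / 2)
    by (rewrite (S_INR m); ring).
  rewrite sin_plus, sin_PI2, cos_PI2, cos_plus.
  auto_derive; [easy|].
  replace (/ (1 + t * (t * 1))) with (cos (atan t) ^ 2)
    by (rewrite cos_atan_sqr; f_equal; ring).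
  subst m. simpl. ring.
Qed.

Lemma Derive_n_atan_wave M : forall k s t,
  Derive_n (atan_wave (S k) s) M t * INR (fact k)
  = INR (fact (k + M)) * atan_wave (S k + M) (s + INR M * (PI / 2)) t.
Proof.
  induction M as [|M IH]; intros k s t.
  - simpl. rewrite Nat.add_0_r, Rmult_0_l, Rplus_0_r. ring.
  - transitivity (Derive_n (Derive_n (atan_wave (S k) s) 1) M t * INR (fact k));
      [now rewrite Derive_n_comp, Nat.add_1_r|].
    rewrite (Derive_n_ext (Derive_n (atan_wave (S k) s) 1)
               (fun t => INR (S k) * atan_wave (S (S k)) (s + PI / 2) t))
      by (intros u; apply is_derive_unique, is_derive_atan_wave).
    specialize (IH (S k) (s + PI / 2) t). rewrite fact_simpl, mult_INR in IH.
    rewrite Derive_n_scal_l.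
    transitivity (Derive_n (atan_wave (S (S k)) (s + PI / 2)) M t * (INR (S k) * INR (fact k)));
      [ring | rewrite IH].
    replace (S k + M)%nat with (k + S M)%nat by lia.
    replace (S (S k) + M)%nat with (S k + S M)%nat by lia.
    rewrite (S_INR M). do 2 f_equal. ring.
Qed.

Lemma Derive_n_t_div_1_plus_sqr M :
  Derive_n (fun t => t / (1 + t ^ 2)) M 0 = INR (fact M) * sin (INR M * (PI / 2)).
Proof.
  rewrite (Derive_n_ext _ (atan_wave 1 0)).
  - pose proof (Derive_n_atan_wave M 0 0 0) as H. unfold atan_wave at 2 in H.
    rewrite atan_0, cos_0, pow1, Rmult_0_r, !Rplus_0_l in H. simpl in H.
    rewrite Rmult_1_r, Rmult_1_l in H. exact H.
  - intros t. unfold atan_wave. pose proof (tan_atan t) as Et. unfold tan in Et.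
    pose proof (atan_bound t). assert (0 < cos (atan t)) by (apply cos_gt_0; lra).
    replace (sin (INR 1 * atan t + 0)) with (t * cos (atan t))
      by (rewrite <- Et at 1; replace (INR 1 * atan t + 0) with (atan t) by (simpl; ring);
          field; lra).
    replace (cos (atan t) ^ 1 * (t * cos (atan t))) with (t * cos (atan t) ^ 2) by ring.
    rewrite cos_atan_sqr. field. pose proof (pow2_ge_0 t). lra.
Qed.

Section PowerSums.
Variables (n : nat) (alpha delta : R).
Hypothesis n_pos : (1 <= n)%nat.
Hypothesis delta_range : 0 < delta < PI / 2.
Hypothesis alpha_range : INR n * delta <= alpha <= PI - INR n * delta.

Let x := cot_angle alpha n.
Let r := tan delta.
Let phi (psi : R) : R := cot (alpha - INR n * psi).

Lemma shifted_angle_range psi : - delta < psi < delta -> 0 < alpha - INR n * psi < PI.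
Proof. intros Hpsi. pose proof (INR_n_ge_1 n n_pos). split; nra. Qed.

Lemma alpha_between : 0 < alpha < PI.
Proof.
  pose proof (shifted_angle_range 0) as H0. rewrite Rmult_0_r, Rminus_0_r in H0. apply H0. lra.
Qed.

Lemma atan_range t : - r < t < r -> - delta < atan t < delta.
Proof.
  intros [H1 H2]. assert (E : atan r = delta) by (apply atan_tan; lra).
  apply atan_increasing in H1. apply atan_increasing in H2.
  rewrite atan_opp, E in H1. rewrite E in H2. lra.
Qed.

Lemma tan_delta_pos : 0 < r.
Proof.
  unfold r, tan. apply Rdiv_lt_0_compat; [apply sin_gt_0 | apply cos_gt_0]; lra.
Qed.

Lemma smooth_on_phi : smooth_on (- delta) delta phi.
Proof.
  assert (Hlin : smooth_on (- delta) delta (fun psi => alpha - INR n * psi))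
    by auto using smooth_on_minus, smooth_on_const, smooth_on_scal, smooth_on_id.
  unfold phi, cot. apply smooth_on_div.
  - apply smooth_on_comp with 0 PI; auto using smooth_on_cos, shifted_angle_range.
  - apply smooth_on_comp with 0 PI; auto using smooth_on_sin, shifted_angle_range.
  - intros psi Hpsi. apply Rgt_not_eq, sin_gt_0; apply shifted_angle_range; auto.
Qed.

Lemma geometric_sum_eq t : - r < t < r ->
  sum_f_R0 (fun k => x k / (1 - x k * t)) (n - 1)
  = INR n * (Derive atan t * phi (atan t)) - INR n * (t / (1 + t ^ 2)).
Proof.
  intros Ht. unfold x. rewrite sum_cot_angle_geometric; auto using alpha_between.
  2: apply shifted_angle_range, atan_range, Ht.
  rewrite (is_derive_unique _ _ _ (is_derive_atan t)). unfold phi, Rsqr.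
  field. pose proof (pow2_ge_0 t). simpl in *. lra.
Qed.

Lemma Derive_n_geometric_sum_at0 M :
  Derive_n (fun t => sum_f_R0 (fun k => x k / (1 - x k * t)) (n - 1)) M 0
  = INR (fact M) * sum_f_R0 (fun k => x k ^ S M) (n - 1).
Proof.
  pose proof tan_delta_pos as Hr.
  assert (Hnz : forall k s, (k <= n - 1)%nat -> - r < s < r -> 1 - x k * s <> 0)
    by (intros k s Hk Hs; apply Rgt_not_eq, one_sub_cot_angle_mul_pos;
        auto using alpha_between, shifted_angle_range, atan_range).
  rewrite Derive_n_sum_f_R0.
  - rewrite scal_sum. apply sum_eq. intros k Hk.
    rewrite (Derive_n_geometric (- r) r) by (auto; lra).
    rewrite Rmult_0_r, Rminus_0_r, pow1. field.
  - apply filter_imp with (2 := locally_interval (- r) r 0 ltac:(lra)).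
    intros s Hs k j Hk _. apply smooth_on_ex_derive_n with (- r) r; auto.
    apply smooth_on_div; auto using smooth_on_const, smooth_on_minus, smooth_on_scal, smooth_on_id.
Qed.

Lemma power_sum_cot_angle_taylor M :
  INR (fact M) * sum_f_R0 (fun k => x k ^ S M) (n - 1)
  = INR n * (sum_f_R0 (fun j => Derive_n phi j 0 * arctanA (S M) (S j)) M
             - INR (fact M) * sin (INR M * (PI / 2))).
Proof.
  pose proof tan_delta_pos as Hr.
  assert (Hphi : smooth_on (- r) r (fun t => INR n * (Derive atan t * phi (atan t)))).
  { apply smooth_on_scal, smooth_on_mult.
    - apply smooth_on_Derive, smooth_on_atan.
    - apply smooth_on_comp with (- delta) delta; auto using smooth_on_phi, smooth_on_atan, atan_range. }
  assert (Hrat : smooth_on (- r) r (fun t => INR n * (t / (1 + t ^ 2)))).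
  { apply smooth_on_scal, smooth_on_div;
      auto using smooth_on_id, smooth_on_plus, smooth_on_const, smooth_on_pow.
    intros t _. pose proof (pow2_ge_0 t). lra. }
  rewrite <- Derive_n_geometric_sum_at0.
  rewrite (Derive_n_ext_loc _ (fun t => INR n * (Derive atan t * phi (atan t)) - INR n * (t / (1 + t ^ 2)))).
  2: { apply locally_eq_on with (- r) r; [exact geometric_sum_eq | lra]. }
  rewrite (Derive_n_minus (fun t => INR n * (Derive atan t * phi (atan t))) (fun t => INR n * (t / (1 + t ^ 2))))
    by (apply smooth_on_locally with (- r) r; auto; lra).
  rewrite !Derive_n_scal_l, Derive_n_t_div_1_plus_sqr.
  rewrite (Derive_n_Derive_mult_comp (- r) r (- delta) delta atan phi);
    auto using smooth_on_atan, smooth_on_phi, atan_range; [|lra].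
  rewrite atan_0, Rmult_minus_distr_l. do 2 f_equal.
  apply sum_eq. intros j Hj. rewrite arctanA_bell by exact Hj. reflexivity.
Qed.

End PowerSums.

(** * The cases alpha = pi/2 and alpha = pi/4 *)

Lemma tangentT_even q : tangentT (2 * q) = 0.
Proof.
  unfold tangentT.
  assert (L : locally (- 0) (fun y => forall k, (k <= 2 * q)%nat -> ex_derive_n tan k y)).
  { rewrite Ropp_0. apply smooth_on_locally with (- (PI / 2)) (PI / 2).
    - apply smooth_on_tan.
    - pose proof PI2_RGT_0. lra. }
  pose proof (Derive_n_comp_opp tan (2 * q) 0 L) as H.
  rewrite (Derive_n_ext _ (fun y => - tan y)), Derive_n_opp, Ropp_0, pow_1_even in H
    by (intros y; apply tan_neg).
  lra.
Qed.

Lemma Ssum_eq m n alpha : Ssum m n alpha = sum_f_R0 (fun k => cot_angle alpha n k ^ m) (n - 1).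
Proof. unfold Ssum, cot_angle. rewrite <- sum_n_Reals. reflexivity. Qed.

Lemma sum_n_m_from_1 (F : nat -> R) m : sum_n_m F 1 (S m) = sum_f_R0 (fun i => F (S i)) m.
Proof. rewrite <- sum_n_m_S, <- sum_n_Reals. reflexivity. Qed.

Lemma sum_f_R0_pairs (g : nat -> R) q :
  sum_f_R0 g (2 * q + 1) = sum_f_R0 (fun i => g (2 * i)%nat + g (2 * i + 1)%nat) q.
Proof.
  induction q as [|q IH]; [simpl; ring|].
  replace (2 * S q + 1)%nat with (S (S (2 * q + 1))) by lia.
  change (sum_f_R0 g (2 * q + 1) + g (S (2 * q + 1)) + g (S (S (2 * q + 1)))
          = sum_f_R0 (fun i => g (2 * i)%nat + g (2 * i + 1)%nat) q
            + (g (2 * S q)%nat + g (2 * S q + 1)%nat)).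
  rewrite IH. replace (S (2 * q + 1)) with (2 * S q)%nat by lia.
  replace (S (2 * S q)) with (2 * S q + 1)%nat by lia. ring.
Qed.

Lemma sin_half_pi_odd q : sin (INR (2 * q + 1) * (PI / 2)) = (-1) ^ q.
Proof.
  induction q as [|q IH]; [simpl; rewrite Rmult_1_l; apply sin_PI2|].
  replace (INR (2 * S q + 1) * (PI / 2)) with (INR (2 * q + 1) * (PI / 2) + PI)
    by (rewrite !plus_INR, !mult_INR, !S_INR; simpl; field).
  rewrite neg_sin, IH. simpl. ring.
Qed.

Lemma sin_half_pi_even q : sin (INR (2 * q) * (PI / 2)) = 0.
Proof.
  apply sin_eq_0_1. exists (Z.of_nat q). rewrite <- INR_IZR_INZ, mult_INR. simpl. field.
Qed.

Lemma quarter_delta_range n : (1 <= n)%nat -> 0 < PI / (4 * INR n) < PI / 2 /\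
  INR n * (PI / (4 * INR n)) = PI / 4.
Proof.
  intros Hn. pose proof (INR_n_ge_1 n Hn). pose proof PI_RGT_0.
  repeat split; [apply Rdiv_lt_0_compat; lra | | field; lra].
  apply Rmult_lt_reg_r with (4 * INR n); [lra|]. unfold Rdiv.
  rewrite Rmult_assoc, Rinv_l, Rmult_1_r by lra. nra.
Qed.

Lemma Derive_n_cot_half_pi_sub n j :
  Derive_n (fun psi => cot (PI / 2 - INR n * psi)) j 0 = INR n ^ j * tangentT j.
Proof.
  rewrite (Derive_n_ext _ (fun psi => tan (INR n * psi)))
    by (intros; unfold cot, tan; rewrite cos_shift, sin_shift; reflexivity).
  rewrite Derive_n_comp_scal, Rmult_0_r; [reflexivity|].
  rewrite Rmult_0_r. apply smooth_on_locally with (- (PI / 2)) (PI / 2);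
    [apply smooth_on_tan | pose proof PI2_RGT_0; lra].
Qed.

Lemma cot_quarter_pi_sub y : - (PI / 4) < y < PI / 4 -> cot (PI / 4 - y) = tan (2 * y) + / cos (2 * y).
Proof.
  intros Hy. pose proof PI_RGT_0.
  assert (Hc : 0 < cos (y + PI / 4)) by (apply cos_gt_0; lra).
  assert (Hs : 0 < sin (y + PI / 4)) by (apply sin_gt_0; lra).
  rewrite cos_plus, cos_PI4, sin_PI4 in Hc. rewrite sin_plus, cos_PI4, sin_PI4 in Hs.
  assert (Hsq : 0 < sqrt 2) by (apply sqrt_lt_R0; lra).
  assert (H1 : 0 < cos y - sin y).
  { replace (cos y * (1 / sqrt 2) - sin y * (1 / sqrt 2)) with ((cos y - sin y) / sqrt 2) in Hc
      by (field; lra).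
    apply Rmult_lt_reg_r with (/ sqrt 2); [apply Rinv_0_lt_compat; lra | lra]. }
  assert (H2 : 0 < cos y + sin y).
  { replace (sin y * (1 / sqrt 2) + cos y * (1 / sqrt 2)) with ((cos y + sin y) / sqrt 2) in Hs
      by (field; lra).
    apply Rmult_lt_reg_r with (/ sqrt 2); [apply Rinv_0_lt_compat; lra | lra]. }
  unfold cot, tan. rewrite cos_minus, sin_minus, cos_PI4, sin_PI4, sin_2a, cos_2a.
  pose proof (sin2_cos2 y) as E. unfold Rsqr in E.
  replace (cos y * cos y - sin y * sin y) with ((cos y - sin y) * (cos y + sin y)) by ring.
  field_simplify_eq; [|repeat split; lra].
  transitivity (2 * cos y * sin y + (sin y * sin y + cos y * cos y)); [ring | rewrite E; ring].
Qed.

Lemma Derive_n_cot_quarter_pi_sub n j : (1 <= n)%nat ->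
  Derive_n (fun psi => cot (PI / 4 - INR n * psi)) j 0 = (2 * INR n) ^ j * zigzagE j.
Proof.
  intros Hn. destruct (quarter_delta_range n Hn) as [Hd Hnd]. pose proof (INR_n_ge_1 n Hn).
  rewrite (Derive_n_ext_loc _ (fun psi => tan (2 * INR n * psi) + / cos (2 * INR n * psi))).
  2: { apply locally_eq_on with (- (PI / (4 * INR n))) (PI / (4 * INR n)); [|lra].
       intros psi Hpsi. rewrite Rmult_assoc. apply cot_quarter_pi_sub. split; nra. }
  pose proof (Derive_n_comp_scal (fun z => tan z + / cos z) (2 * INR n) j 0) as Hscal.
  rewrite Rmult_0_r in Hscal. apply Hscal.
  apply smooth_on_locally with (- (PI / 2)) (PI / 2);
    [apply smooth_on_plus; [apply smooth_on_tan | apply smooth_on_sec] | pose proof PI2_RGT_0; lra].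
Qed.

Lemma sum_odd_tangent_terms n (A : nat -> R) q :
  INR n * sum_f_R0 (fun j => INR n ^ j * tangentT j * A (S j)) (2 * q + 1)
  = sum_n_m (fun k => INR n ^ (2 * k) * A (2 * k)%nat * tangentT (2 * k - 1)) 1 (S q).
Proof.
  rewrite sum_n_m_from_1, sum_f_R0_pairs, scal_sum. apply sum_eq. intros i _.
  rewrite tangentT_even. replace (2 * S i - 1)%nat with (2 * i + 1)%nat by lia.
  replace (2 * S i)%nat with (S (2 * i + 1)) by lia. simpl pow. ring.
Qed.

Lemma Ssum_half_pi m n : (1 <= m)%nat -> (1 <= n)%nat ->
  Ssum (2 * m) n (PI / 2) =
    (-1) ^ m * INR n
    + / INR (fact (2 * m - 1)) *
      sum_n_m (fun k => INR n ^ (2 * k) * arctanA (2 * m) (2 * k) * tangentT (2 * k - 1)) 1 m.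
Proof.
  intros Hm Hn. destruct m as [|q]; [lia|].
  destruct (quarter_delta_range n Hn) as [Hd Hnd].
  assert (Ha : INR n * (PI / (4 * INR n)) <= PI / 2 <= PI - INR n * (PI / (4 * INR n)))
    by (rewrite Hnd; lra).
  pose proof (power_sum_cot_angle_taylor n (PI / 2) (PI / (4 * INR n)) Hn Hd Ha (2 * q + 1)) as E.
  rewrite sin_half_pi_odd in E.
  rewrite (sum_eq _ (fun j => INR n ^ j * tangentT j * arctanA (S (2 * q + 1)) (S j)) (2 * q + 1)) in E
    by (intros; rewrite Derive_n_cot_half_pi_sub; ring).
  rewrite Ssum_eq. replace (2 * S q)%nat with (S (2 * q + 1)) by lia.
  replace (S (2 * q + 1) - 1)%nat with (2 * q + 1)%nat by lia.
  rewrite <- sum_odd_tangent_terms.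
  apply Rmult_eq_reg_l with (INR (fact (2 * q + 1))); [|apply INR_fact_neq_0].
  rewrite E. simpl pow. field. apply INR_fact_neq_0.
Qed.

Lemma Ssum_quarter_pi m n : (1 <= m)%nat -> (1 <= n)%nat ->
  Ssum m n (PI / 4) =
    (if Nat.even m then (-1) ^ (m / 2) * INR n else 0)
    + / (2 * INR (fact (m - 1))) *
      sum_n_m (fun k => (2 * INR n) ^ k * arctanA m k * zigzagE (k - 1)) 1 m.
Proof.
  intros Hm Hn. destruct m as [|M]; [lia|].
  destruct (quarter_delta_range n Hn) as [Hd Hnd].
  assert (Ha : INR n * (PI / (4 * INR n)) <= PI / 4 <= PI - INR n * (PI / (4 * INR n)))
    by (rewrite Hnd; lra).
  pose proof (power_sum_cot_angle_taylor n (PI / 4) (PI / (4 * INR n)) Hn Hd Ha M) as E.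
  rewrite (sum_eq _ (fun j => (2 * INR n) ^ j * zigzagE j * arctanA (S M) (S j)) M) in E
    by (intros; rewrite Derive_n_cot_quarter_pi_sub by exact Hn; ring).
  rewrite Ssum_eq, sum_n_m_from_1. replace (S M - 1)%nat with M by lia.
  rewrite (sum_eq _ (fun j => (2 * INR n) ^ j * zigzagE j * arctanA (S M) (S j) * (2 * INR n)) M)
    by (intros j _; replace (S j - 1)%nat with j by lia; simpl; ring).
  rewrite <- scal_sum.
  apply Rmult_eq_reg_l with (INR (fact M)); [|apply INR_fact_neq_0].
  rewrite E. destruct (Nat.Even_or_Odd M) as [[q ->]|[q ->]].
  - replace (Nat.even (S (2 * q))) with false
      by (rewrite <- Nat.add_1_l, Nat.even_add_mul_2; reflexivity).
    rewrite sin_half_pi_even. field. apply INR_fact_neq_0.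
  - replace (Nat.even (S (2 * q + 1))) with true
      by (replace (S (2 * q + 1)) with (2 * (q + 1))%nat by lia; symmetry; apply Nat.even_mul).
    replace (S (2 * q + 1) / 2)%nat with (S q)
      by (replace (S (2 * q + 1)) with (S q * 2)%nat by lia; symmetry; apply Nat.div_mul; lia).
    rewrite sin_half_pi_odd. simpl pow. field. apply INR_fact_neq_0.
Qed.

Theorem corollary6p6 (m n : nat) (hm : (1 <= m)%nat) (hn : (2 <= n)%nat) :
  Ssum (2 * m) n (PI / 2) =
    (-1) ^ m * INR n
    + / INR (fact (2 * m - 1)) *
      sum_n_m (fun k => INR n ^ (2 * k) * arctanA (2 * m) (2 * k) * tangentT (2 * k - 1)) 1 m
  /\
  Ssum m n (PI / 4) =
    (if Nat.even m then (-1) ^ (m / 2) * INR n else 0)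
    + / (2 * INR (fact (m - 1))) *
      sum_n_m (fun k => (2 * INR n) ^ k * arctanA m k * zigzagE (k - 1)) 1 m.
Proof.
  split; [apply Ssum_half_pi | apply Ssum_quarter_pi]; lia.
Qed.
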